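(* Let $G$ be a finite group of order $mn$ and $H$ a normal subgroup of $G$ of order $n$. Then the family of cosets of $H$ in $G$ other than $H$ itself is an $(mn,m-1,n,0,mn-n)$-DPDF and an $(mn,m-1,n,mn-2n,0)$-EPDF in $G$.
   Context: Groups are written multiplicatively with identity $e$; $G^*=G\setminus\{e\}$. For $D\subseteq G$, $\Delta(D)$ is the multiset $\{xy^{-1}: x,y\in D, x\ne y\}$; for $D_1,D_2\subseteq G$, $\Delta(D_1,D_2)$ is the multiset $\{xy^{-1}:x\in D_1,y\in D_2\}$. For a family $A=\{A_1,\dots,A_s\}$ of pairwise disjoint subsets, ${\rm Int}(A)=\bigcup_i\Delta(A_i)$ and ${\rm Ext}(A)=\bigcup_{i\ne j}\Delta(A_i,A_j)$ (multiset unions). For $|G|=v$, a $(v,s,k,\lambda,\mu)$-DPDF is a family of $s$ pairwise disjoint $k$-subsets of $G^*$ with union $S$ such that ${\rm Int}(A)$ contains each element of $S$ exactly $\lambda$ times and each element of $G\setminus(S\cup\{e\})$ exactly $\mu$ times; a $(v,s,k,\lambda,\mu)$-EPDF is defined the same way using ${\rm Ext}(A)$. *)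

From mathcomp Require Import all_boot all_fingroup.
Set Implicit Arguments. Unset Strict Implicit. Unset Printing Implicit Defensive.
Import GroupScope.
Local Open Scope group_scope.

Section PDF.
Variable gT : finGroupType.

(* Multiplicity of g in Int(A) = union over X in A of Delta(X). *)
Definition int_count (A : {set {set gT}}) (g : gT) : nat :=
  \sum_(X in A) #|[set p in setX X X | (p.1 != p.2) && ((p.1 * p.2^-1)%g == g)]|.

(* Multiplicity of g in Ext(A) = union over X != Y in A of Delta(X, Y). *)
Definition ext_count (A : {set {set gT}}) (g : gT) : nat :=
  \sum_(X in A) \sum_(Y in A | Y != X)
     #|[set p in setX X Y | (p.1 * p.2^-1)%g == g]|.

Definition pdf_family (G : {set gT}) (v s k : nat) (A : {set {set gT}}) :=
  [/\ #|G| = v, #|A| = s,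
      (forall X, X \in A -> X \subset G :\ 1%g /\ #|X| = k)
    & (forall X Y, X \in A -> Y \in A -> X != Y -> [disjoint X & Y])].

Definition is_DPDF (G : {set gT}) (v s k lam mu : nat) (A : {set {set gT}}) :=
  pdf_family G v s k A /\
  (forall g, g \in G -> g != 1%g ->
     int_count A g = (if g \in cover A then lam else mu)).

Definition is_EPDF (G : {set gT}) (v s k lam mu : nat) (A : {set {set gT}}) :=
  pdf_family G v s k A /\
  (forall g, g \in G -> g != 1%g ->
     ext_count A g = (if g \in cover A then lam else mu)).

End PDF.

From mathcomp Require Import all_boot all_fingroup.
Local Open Scope group_scope.

Set Implicit Arguments.
Unset Strict Implicit.
Unset Printing Implicit Defensive.

(* For a family A of pairwise disjoint sets with union S and g <> 1, the
   multiplicities of g in Int(A) and in Ext(A) add up to its multiplicity in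
   Delta(S), which is |S :&: gS|.  For the nontrivial cosets of H we have
   S = G \ H, so this total is |G| - |H| if g is in H and |G| - 2|H|
   otherwise.  Int(A) is computed coset by coset: by normality gHb = Hgb,
   which is Hb when g is in H and disjoint from it otherwise, so Int(A)
   counts g (m - 1)n times or not at all; Ext(A) is the difference. *)

Section DifferenceCounts.
Variable gT : finGroupType.
Implicit Types (g : gT) (X Y : {set gT}) (A : {set {set gT}}).

Lemma card_mulV_pairs X Y g :
  #|[set p in setX X Y | p.1 * p.2^-1 == g]| = #|X :&: g *: Y|.
Proof.
have graph_inj : injective (fun x => (x, g^-1 * x)) by move=> x1 x2 [].
rewrite -(card_imset _ graph_inj); apply: eq_card => -[x y].
rewrite inE /=; apply/idP/imsetP => [/andP[/setXP[xX yY] /eqP def_g] | [z]].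
  have def_y : g^-1 * x = y by rewrite -def_g invMg invgK mulgVK.
  by exists x; rewrite ?def_y // inE xX mem_lcoset def_y.
rewrite inE mem_lcoset => /andP[zX zY] [-> ->].
by rewrite inE /= zX zY invMg invgK mulKVg eqxx.
Qed.

Lemma int_countE A g : g != 1 ->
  int_count A g = \sum_(X in A) #|X :&: g *: X|.
Proof.
move=> ntg; apply: eq_bigr => X _; rewrite -card_mulV_pairs.
apply: eq_card => p; rewrite !inE; case: eqP => [-> | _] //=.
by rewrite mulgV eq_sym (negbTE ntg) andbF.
Qed.

Lemma ext_countE A g :
  ext_count A g = \sum_(X in A) \sum_(Y in A | Y != X) #|X :&: g *: Y|.
Proof.
by apply: eq_bigr => X _; apply: eq_bigr => Y _; apply: card_mulV_pairs.
Qed.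

Lemma card_setI_lcoset_sum X Y g :
  #|X :&: g *: Y| = \sum_(x in X) \sum_(y in Y) (x == (g * y)%g).
Proof.
rewrite -sum1_card big_mkcond [RHS]big_mkcond /=; apply: eq_bigr => x _.
rewrite inE; case: (x \in X) => //=.
rewrite mem_lcoset; case: (boolP (g^-1 * x \in Y)) => [xY | xNY].
  rewrite (bigD1 (g^-1 * x)) //= mulKVg eqxx big1 // => y /andP[_ yx].
  by apply/eqP; rewrite eqb0; apply: contra yx => /eqP ->; rewrite mulKg.
rewrite big1 // => y yY; apply/eqP; rewrite eqb0.
by apply: contra xNY => /eqP ->; rewrite mulKg.
Qed.

Lemma sum_card_setI_lcoset_cover A g : trivIset A ->
  \sum_(X in A) \sum_(Y in A) #|X :&: g *: Y| = #|cover A :&: g *: cover A|.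
Proof.
move=> tiA; rewrite card_setI_lcoset_sum big_trivIset //=.
apply: eq_bigr => X _.
under eq_bigr => Y _ do rewrite card_setI_lcoset_sum.
by rewrite exchange_big; apply: eq_bigr => x _; rewrite big_trivIset.
Qed.

Lemma int_count_add_ext_count A g : trivIset A -> g != 1 ->
  int_count A g + ext_count A g = #|cover A :&: g *: cover A|.
Proof.
move=> tiA ntg; rewrite int_countE // ext_countE -big_split.
rewrite -sum_card_setI_lcoset_cover //.
by apply: eq_bigr => X XA; rewrite [RHS](bigD1 X).
Qed.

End DifferenceCounts.

Section Cosets.
Variables (gT : finGroupType) (H : {group gT}).

Lemma card_rcosetI a b :
  #|H :* a :&: H :* b| = if a * b^-1 \in H then #|H| else 0%N.
Proof.
rewrite -mem_rcoset; case: rcoset_eqP => [-> | neq_ab].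
  by rewrite setIid card_rcoset.
apply/eqP; rewrite cards_eq0; apply/eqP/setP => z; rewrite !inE.
apply/negbTE/andP => -[/rcoset_eqP za /rcoset_eqP zb].
by apply: neq_ab; rewrite -za.
Qed.

Lemma lcoset_rcoset_norm g b : g \in 'N(H) -> g *: (H :* b) = H :* (g * b).
Proof.
move=> nHg; apply/setP => x; rewrite mem_lcoset !mem_rcoset invMg mulgA.
by rewrite -(memJ_norm (x * b^-1 * g^-1) nHg) conjgE !mulgA mulgVK.
Qed.

End Cosets.

Section SubgroupCosets.
Variables (gT : finGroupType) (G H : {group gT}).
Hypothesis sHG : H \subset G.
Local Notation A := (rcosets H G :\ (H : {set gT})).
Let tiHG : trivIset (rcosets H G) := partition_trivIset (rcosets_partition sHG).

Lemma card_setDI_lcoset g : g \in G ->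
  #|(G :\: H) :&: g *: (G :\: H)|
    = if g \in H then #|G| - #|H| else #|G| - 2 * #|H|.
Proof.
move=> Gg.
have -> : (G :\: H) :&: g *: (G :\: H) = G :\: (H :|: g *: H).
  apply/setP => x; rewrite !inE !mem_lcoset !inE (groupMl _ (groupVr Gg)).
  by rewrite negb_or; case: (x \in G); rewrite ?andbF ?andbT.
rewrite cardsDS; last by rewrite subUset sHG -(lcoset_id Gg) lcosetS.
case: ifP => Hg; first by rewrite lcoset_id // setUid.
rewrite cardsU card_lcoset; have -> : H :&: g *: H = set0.
  apply/setP => z; rewrite !inE; apply/negbTE/andP => -[Hz /lcoset_eqP gHz].
  by have := lcoset_refl H g; rewrite -gHz lcoset_id // Hg.
by rewrite cards0 subn0 addnn -mul2n.
Qed.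

Lemma group_in_rcosets : (H : {set gT}) \in rcosets H G.
Proof. by apply/rcosetsP; exists 1; rewrite ?rcoset1. Qed.

Lemma trivIset_nontrivial_rcosets : trivIset A.
Proof. exact: trivIsetS (subsetDl _ _) tiHG. Qed.

Lemma cover_nontrivial_rcosets : cover A = G :\: H.
Proof.
by rewrite coverD1 ?(cover_partition (rcosets_partition sHG)) ?group_in_rcosets.
Qed.

Lemma card_nontrivial_rcosets : #|A| = (#|G : H| - 1)%N.
Proof.
rewrite /indexg [#|rcosets H G|](cardsD1 (H : {set gT})) group_in_rcosets.
by rewrite add1n subn1.
Qed.

Lemma nontrivial_rcosets_pdf_family : pdf_family G #|G| (#|G : H| - 1) #|H| A.
Proof.
split=> //; first exact: card_nontrivial_rcosets.
  move=> X AX; split.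
    apply: subset_trans (_ : X \subset cover A) _; first exact: bigcup_sup.
    by rewrite cover_nontrivial_rcosets setDS // sub1set group1.
  by case/setD1P: AX => _ /rcosetsP[x _ ->]; apply: card_rcoset.
exact/trivIsetP/trivIset_nontrivial_rcosets.
Qed.

End SubgroupCosets.

Section NormalCosets.
Variables (gT : finGroupType) (G H : {group gT}).
Hypothesis nsHG : H <| G.
Local Notation A := (rcosets H G :\ (H : {set gT})).
Let sHG : H \subset G := normal_sub nsHG.

Lemma int_count_nontrivial_rcosets g : g \in G -> g != 1 ->
  int_count A g = if g \in H then ((#|G : H| - 1) * #|H|)%N else 0%N.
Proof.
move=> Gg ntg; rewrite int_countE // -card_nontrivial_rcosets //.
rewrite (eq_bigr (fun=> if g \in H then #|H| else 0%N)) ?sum_nat_const.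
  by case: ifP; rewrite ?muln0.
move=> X /setD1P[_ /rcosetsP[b Gb ->]].
rewrite lcoset_rcoset_norm ?(subsetP (normal_norm nsHG)) //.
by rewrite card_rcosetI invMg mulgA mulgV mul1g groupV.
Qed.

Lemma ext_count_nontrivial_rcosets g : g \in G -> g != 1 ->
  ext_count A g = if g \in H then 0%N else (#|G| - 2 * #|H|)%N.
Proof.
move=> Gg ntg; apply/eqP; rewrite -(eqn_add2l (int_count A g)).
rewrite int_count_add_ext_count ?trivIset_nontrivial_rcosets //.
rewrite cover_nontrivial_rcosets // card_setDI_lcoset //.
rewrite int_count_nontrivial_rcosets //.
case: ifP => _; last by rewrite add0n.
by rewrite -(Lagrange sHG) addn0 mulnBl mul1n mulnC.
Qed.
End NormalCosets.

Theorem mainTheorem9 (gT : finGroupType) (G H : {group gT}) (m n : nat) :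
  #|G| = (m * n)%N -> #|H| = n -> H <| G ->
  is_DPDF G (m * n) (m - 1) n 0 (m * n - n) (rcosets H G :\ (H : {set gT})) /\
  is_EPDF G (m * n) (m - 1) n (m * n - 2 * n) 0 (rcosets H G :\ (H : {set gT})).
Proof.
move=> oG oH nsHG; have sHG := normal_sub nsHG.
have iGH : #|G : H| = m.
  by apply/eqP; rewrite -(eqn_pmul2l (cardG_gt0 H)) Lagrange // oG oH mulnC.
have famA := nontrivial_rcosets_pdf_family sHG; rewrite oG oH iGH in famA.
split; split=> // g Gg ntg; rewrite cover_nontrivial_rcosets // !inE Gg andbT.
  rewrite int_count_nontrivial_rcosets // iGH oH mulnBl mul1n.
  by case: (g \in H).
by rewrite ext_count_nontrivial_rcosets // oG oH; case: (g \in H).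
Qed.
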